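(* Let $\Gamma$ be a finite connected cubic graph, let $\alpha$ be a vertex of $\Gamma$, let $G$ be a vertex-transitive subgroup of $\mathrm{Aut}(\Gamma)$ and let $N$ be a normal subgroup of $G$ acting semiregularly on $V\Gamma$. Suppose that the vertex stabilizer $G_\alpha$ is a non-identity $2$-group and that the normal quotient $\Gamma/N$ is a cycle of length $r\ge 3$. Let $K$ be the kernel of the action of $G$ on the set of $N$-orbits on $V\Gamma$. Then either (1) $|G_\alpha|=2$ and $K_\alpha=1$, or (2) $r$ is even and $G_\alpha=K_\alpha$ is an elementary abelian $2$-group of order at most $2^{r/2}$.
   Context: For $N\le\mathrm{Aut}(\Gamma)$, the normal quotient $\Gamma/N$ is the graph whose vertices are the $N$-orbits on $V\Gamma$, two distinct orbits being adjacent if some edge of $\Gamma$ joins a vertex of one to a vertex of the other. A cycle is a connected graph in which every vertex has valency $2$. $G_\alpha$ and $K_\alpha$ denote the stabilizers of $\alpha$ in $G$ and $K$. *)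

From mathcomp Require Import all_boot all_fingroup all_solvable.
Set Implicit Arguments. Unset Strict Implicit. Unset Printing Implicit Defensive.
Local Open Scope group_scope.

Definition simple_graph (V : finType) (e : rel V) : Prop :=
  irreflexive e /\ symmetric e.

Definition graph_connected (V : finType) (e : rel V) : Prop :=
  forall x y : V, connect e x y.

Definition cubic (V : finType) (e : rel V) : Prop :=
  forall x : V, #|[set y | e x y]| = 3.

Definition Aut_graph (V : finType) (e : rel V) : {set {perm V}} :=
  [set g : {perm V} | [forall x, forall y, e (g x) (g y) == e x y]].

Definition orbs (V : finType) (N : {set {perm V}}) : {set {set V}} :=
  [set orbit 'P N x | x : V].

Definition quot_adj (V : finType) (e : rel V) (N : {set {perm V}}) : rel {set V} :=
  fun B C => [&& B \in orbs N, C \in orbs N, B != C &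
                 [exists x in B, exists y in C, e x y]].

Definition quotient_is_cycle (V : finType) (e : rel V) (N : {set {perm V}}) (r : nat)
  : Prop :=
  [/\ #|orbs N| = r,
      (forall B C, B \in orbs N -> C \in orbs N -> connect (quot_adj e N) B C) &
      (forall B, B \in orbs N -> #|[set C | quot_adj e N B C]| = 2)].

Definition orbit_kernel (V : finType) (G N : {set {perm V}}) : {set {perm V}} :=
  'C_G(orbs N | ('P^*)%act).

(* A vertex x has its three neighbours
   in its own orbit and in the two orbits adjacent to it, at least one in each adjacent orbit,
   and by vertex-transitivity the number lying in its own orbit does not depend on x.
   If that number is positive, x has exactly one neighbour in each of these three orbits, so
   an element of K fixing x fixes its neighbours, hence every vertex: K_x = 1.  An element of
   G_x fixing one orbit adjacent to that of x fixes the whole cycle Gamma/N, so lies in K_x;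
   hence G_x acts faithfully on the two adjacent orbits and |G_x| <= 2.
   If that number is 0, every orbit B has a partner orbit B' in which each vertex of B has
   two neighbours; by double counting B'' = B, so r is even, and G_x = K_x since G_x fixes
   the orbit of x and its partner.  The arcs from B to B' split into two N-orbits, which each
   element of K fixes or swaps; an element of K_x fixing them for one orbit of each pair
   {B, B'} fixes every vertex.  This embeds K_x into (Z/2)^(r/2). *)

From mathcomp Require Import all_boot all_fingroup all_solvable.
From mathcomp Require Import zify.
Set Implicit Arguments. Unset Strict Implicit. Unset Printing Implicit Defensive.
Local Open Scope group_scope.

Lemma card2_set2 (T : finType) (S : {set T}) x y :
  #|S| = 2 -> x \in S -> y \in S -> x != y -> S = [set x; y].
Proof.
move=> S2 Sx Sy xy; apply/esym/eqP.
rewrite eqEcard S2 cards2 xy leqnn andbT.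
by apply/subsetP => z; rewrite !inE => /orP[]/eqP->.
Qed.

Lemma card2_fixed (T : finType) (S : {set T}) (f : T -> T) x :
  #|S| = 2 -> injective f -> {in S, forall y, f y \in S} -> x \in S -> f x = x ->
  {in S, f =1 id}.
Proof.
move=> S2 f_inj fS Sx fx y Sy /=; have [->//|yx] := eqVneq y x.
have := fS y Sy; rewrite (card2_set2 S2 Sx Sy) 1?eq_sym // !inE.
by case/orP=> /eqP // fyx; move: yx; rewrite -fx in fyx; rewrite (f_inj _ _ fyx) eqxx.
Qed.

Section FixfreeInvolution.
Variables (T : finType) (D : {set T}) (f : T -> T).
Hypotheses (fD : {in D, forall x, f x \in D}) (fK : {in D, involutive f})
  (f_fixfree : {in D, forall x, f x != x}).

Definition involution_reps := [set x in D | enum_rank x < enum_rank (f x)].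

Lemma involution_repsU x : x \in D -> (x \in involution_reps) || (f x \in involution_reps).
Proof.
move=> Dx; rewrite !inE Dx fD // fK //=.
have: enum_rank x != enum_rank (f x).
  by apply: contraNneq (f_fixfree Dx) => /enum_rank_inj <-.
by rewrite neq_ltn.
Qed.

Lemma card_fixfree_involution : #|D| = (#|involution_reps|).*2.
Proof.
have sub_reps : involution_reps \subset D by apply/subsetP => x /setIdP[].
have D_split : D = involution_reps :|: f @: involution_reps.
  apply/setP => x; rewrite in_setU; apply/idP/orP => [Dx|[/(subsetP sub_reps)//|]].
    have /orP[->|fx_rep] := involution_repsU Dx; first by left.
    by right; apply/imsetP; exists (f x); rewrite ?fK.
  by case/imsetP => y /(subsetP sub_reps) Dy ->; apply: fD.
have disj : [disjoint involution_reps & f @: involution_reps].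
  apply/pred0P => x /=; apply/negP => /andP[] /setIdP[Dx lt_x].
  case/imsetP => y /setIdP[Dy lt_y] xE.
  by move: lt_x; rewrite xE fK // => /(ltn_trans lt_y); rewrite ltnn.
rewrite {1}D_split cardsU (disjoint_setI0 disj) cards0 subn0 card_in_imset ?addnn // => x y.
by move=> /(subsetP sub_reps) Dx /(subsetP sub_reps) Dy fxy; rewrite -(fK Dx) fxy fK.
Qed.

End FixfreeInvolution.

Section CycleAutomorphism.
Variables (T : finType) (adj : rel T) (D : {set T}).
Hypotheses (adj_sym : symmetric adj) (adjD : forall x y, adj x y -> y \in D)
  (adj_deg2 : {in D, forall x, #|[set y | adj x y]| = 2})
  (adj_connected : {in D &, forall x y, connect adj x y}).

Lemma cycle_aut_fix_edge (f : T -> T) x y :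
  injective f -> (forall u v, adj u v -> adj (f u) (f v)) ->
  adj x y -> f x = x -> f y = y -> {in D, f =1 id}.
Proof.
move=> f_inj f_adj xy fx fy.
pose fixes_star u := f u = u /\ {in [set v | adj u v], f =1 id}.
have star_fixed u v : adj v u -> f u = u -> f v = v -> fixes_star u.
  move=> vu fu fv; split=> //; apply: card2_fixed fv => //.
  - by apply: adj_deg2; apply: adjD vu.
  - by move=> w; rewrite !inE => uw; rewrite -fu; apply: f_adj.
  - by rewrite inE adj_sym.
have x_star : fixes_star x by apply: (star_fixed x y); rewrite // adj_sym.
have Dx : x \in D by apply: (adjD (x := y)); rewrite adj_sym.
move=> z Dz; have /connectP[p p_path ->] := adj_connected Dx Dz.
elim: p x x_star p_path {xy fx fy Dx} => [|u p IHp] x [fx x_fix] /=; first by [].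
case/andP=> xu p_path; apply: IHp p_path.
by apply: (star_fixed u x) => //; apply: x_fix; rewrite inE.
Qed.

End CycleAutomorphism.

Lemma connected_perm_fix (V : finType) (e : rel V) (k : {perm V}) a :
  symmetric e -> graph_connected e ->
  (forall x y, e x y -> k x = x -> k y = y) -> k a = a -> k = 1.
Proof.
move=> e_sym e_conn k_nbr ka.
have k_closed : closed e [pred x | k x == x].
  move=> x y xy /=; apply/eqP/eqP; first exact: k_nbr.
  by apply: k_nbr; rewrite e_sym.
apply/permP => v; rewrite perm1.
by have := closed_connect k_closed (e_conn a v); rewrite !inE /= ka eqxx => /esym/eqP.
Qed.

Lemma stab_permP (V : finType) (H : {set {perm V}}) x g :
  reflect (g \in H /\ g x = x) (g \in 'C_H[x | 'P]).
Proof.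
rewrite inE; apply: (iffP andP) => [[Hg /astab1P]|[Hg gx]]; first by [].
by split=> //; apply/astab1P.
Qed.

Lemma imset_permM (V : finType) (g h : {perm V}) (B : {set V}) :
  (g * h) @: B = h @: (g @: B).
Proof. by rewrite -imset_comp; apply: eq_imset => x; rewrite permM. Qed.

Lemma imset_permK (V : finType) (g : {perm V}) (B : {set V}) : g^-1 @: (g @: B) = B.
Proof. by rewrite -imset_permM mulgV (eq_imset _ (@perm1 _)) imset_id. Qed.

Canonical orbit_kernel_group (V : finType) (G N : {group {perm V}}) :=
  Eval hnf in [group of orbit_kernel G N].

Section NormalQuotient.
Variables (V : finType) (e : rel V) (G N : {group {perm V}}).
Hypotheses (e_simple : simple_graph e) (G_aut : G \subset Aut_graph e)
  (N_normal : N <| G) (N_semiregular : forall x : V, 'C_N[x | 'P] = 1).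

Local Notation orbN x := (orbit 'P N x).

Definition nbr_in (x : V) (C : {set V}) := [set y in C | e x y].

Lemma edge_sym : symmetric e.
Proof. by case: e_simple. Qed.

Lemma edge_aut g x y : g \in G -> e (g x) (g y) = e x y.
Proof. by move=> /(subsetP G_aut); rewrite inE => /forallP/(_ x)/forallP/(_ y)/eqP. Qed.

Lemma N_subG : N \subset G.
Proof. by case/andP: N_normal. Qed.

Lemma memJ_N n g : n \in N -> g \in G -> n ^ g \in N.
Proof. by move=> Nn Gg; rewrite memJ_norm // (subsetP (normal_norm N_normal)). Qed.

Lemma mem_orbN x n : n \in N -> n x \in orbN x.
Proof. by move=> Nn; apply/orbitP; exists n. Qed.

Lemma orbN_aut g x y : g \in G -> y \in orbN x -> g y \in orbN (g x).
Proof. by move=> Gg /orbitP[n Nn <-]; rewrite /= apermE -permJ mem_orbN ?memJ_N. Qed.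

Lemma card_orbN x : #|orbN x| = #|N|.
Proof. by rewrite card_orbit N_semiregular indexg1. Qed.

Lemma imset_orbN g x : g \in G -> g @: orbN x = orbN (g x).
Proof.
move=> Gg; apply/eqP; rewrite eqEcard card_imset; last exact: perm_inj.
rewrite !card_orbN leqnn andbT.
by apply/subsetP => _ /imsetP[y Hy ->]; apply: orbN_aut.
Qed.

Lemma orbsP (B : {set V}) : reflect (exists x, B = orbN x) (B \in orbs N).
Proof. by apply: (iffP imsetP) => [[x _ ->]|[x ->]]; exists x. Qed.

Lemma orbN_orbs x : orbN x \in orbs N.
Proof. by apply/orbsP; exists x. Qed.

Lemma orbs_orbN (B : {set V}) x : B \in orbs N -> x \in B -> B = orbN x.
Proof. by case/orbsP => y -> /orbit_eqP. Qed.

Lemma imset_orbs g (B : {set V}) : g \in G -> B \in orbs N -> g @: B \in orbs N.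
Proof. by move=> Gg /orbsP[x ->]; rewrite imset_orbN // orbN_orbs. Qed.

Lemma imset_orbs_N n (B : {set V}) : n \in N -> B \in orbs N -> n @: B = B.
Proof.
move=> Nn /orbsP[x ->]; rewrite imset_orbN ?(subsetP N_subG) //.
exact/orbit_eqP/mem_orbN.
Qed.

Lemma mem_orbs_N n (B : {set V}) x : n \in N -> B \in orbs N -> (n x \in B) = (x \in B).
Proof. by move=> Nn HB; rewrite -{1}(imset_orbs_N Nn HB) (mem_imset _ _ (@perm_inj _ n)). Qed.

Lemma semiregular_eq n m x : n \in N -> m \in N -> n x = m x -> n = m.
Proof.
move=> Nn Nm nx_mx; apply/eqP; rewrite eq_mulgV1.
have: n * m^-1 \in 'C_N[x | 'P].
  by apply/stab_permP; rewrite groupM ?groupV // permM nx_mx -permM mulgV perm1.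
by rewrite N_semiregular inE.
Qed.

Lemma nbr_in_imset g x (C : {set V}) : g \in G -> nbr_in (g x) (g @: C) = g @: nbr_in x C.
Proof.
move=> Gg; apply/setP => z; rewrite inE; apply/andP/imsetP => [[/imsetP[y Cy ->]]|[y]].
  by rewrite edge_aut // => xy; exists y; rewrite ?inE ?Cy.
by rewrite inE => /andP[Cy xy] ->; rewrite (mem_imset _ _ (@perm_inj _ g)) edge_aut.
Qed.

Lemma card_nbr_in_imset g x (C : {set V}) : g \in G -> #|nbr_in (g x) (g @: C)| = #|nbr_in x C|.
Proof. by move=> Gg; rewrite nbr_in_imset // card_imset //; apply: perm_inj. Qed.

Lemma card_nbr_in_orbN x y (C : {set V}) :
  C \in orbs N -> y \in orbN x -> #|nbr_in y C| = #|nbr_in x C|.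
Proof.
move=> HC /orbitP[n Nn <-]; rewrite -{1}(imset_orbs_N Nn HC).
by rewrite card_nbr_in_imset ?(subsetP N_subG).
Qed.

(* Double counting the edges between two N-orbits, which have the same size. *)
Lemma card_nbr_in_sym x y : #|nbr_in x (orbN y)| = #|nbr_in y (orbN x)|.
Proof.
have count_edges u v : \sum_(w in orbN v) #|nbr_in w (orbN u)| = (#|N| * #|nbr_in v (orbN u)|)%N.
  rewrite -(card_orbN v) -sum_nat_const; apply: eq_bigr => w.
  exact: card_nbr_in_orbN (orbN_orbs u).
apply/eqP; rewrite -(eqn_pmul2l (cardG_gt0 N)) -!count_edges; apply/eqP.
have sum_edges u (C : {set V}) : #|nbr_in u C| = \sum_(w in C) e u w.
  by rewrite -sum1dep_card big_mkcondr; apply: eq_bigr => w _; case: (e u w).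
rewrite (eq_bigr _ (fun w _ => sum_edges w _)) exchange_big.
by apply: eq_bigr => w _; rewrite sum_edges; apply: eq_bigr => u _; rewrite edge_sym.
Qed.

Local Notation adj := (quot_adj e N).

Lemma quot_adj_sym : symmetric adj.
Proof.
suff adj_symI B C : adj B C -> adj C B by move=> B C; apply/idP/idP; apply: adj_symI.
case/and4P=> HB HC BC /existsP[x /andP[Bx /existsP[y /andP[Cy xy]]]].
apply/and4P; split=> //; first by rewrite eq_sym.
by apply/existsP; exists y; rewrite Cy; apply/existsP; exists x; rewrite Bx edge_sym.
Qed.

Lemma quot_adj_orbs (B C : {set V}) : adj B C -> C \in orbs N.
Proof. by case/and4P. Qed.

Lemma quot_adj_imset g (B C : {set V}) : g \in G -> adj B C -> adj (g @: B) (g @: C).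
Proof.
move=> Gg /and4P[HB HC BC /existsP[x /andP[Bx /existsP[y /andP[Cy xy]]]]].
apply/and4P; split; rewrite ?imset_orbs ?(inj_eq (imset_inj (@perm_inj _ g))) //.
apply/existsP; exists (g x); rewrite (mem_imset _ _ (@perm_inj _ g)) Bx /=.
by apply/existsP; exists (g y); rewrite (mem_imset _ _ (@perm_inj _ g)) Cy edge_aut.
Qed.

Lemma quot_adj_nbr_in x (C : {set V}) : adj (orbN x) C -> 0 < #|nbr_in x C|.
Proof.
case/and4P=> _ HC _ /existsP[y /andP[/orbitP[n Nn <-] /existsP[z /andP[Cz yz]]]].
apply/card_gt0P; exists (n^-1 z); rewrite inE mem_orbs_N ?groupV //= Cz.
by rewrite -(edge_aut _ _ (subsetP N_subG n Nn)) permKV.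
Qed.

Lemma nbr_in_quot_adj x (C : {set V}) :
  C \in orbs N -> C != orbN x -> 0 < #|nbr_in x C| -> adj (orbN x) C.
Proof.
move=> HC Cx /card_gt0P[y]; rewrite inE => /andP[Cy xy].
rewrite /quot_adj orbN_orbs HC eq_sym Cx /=.
by apply/existsP; exists x; rewrite orbit_refl; apply/existsP; exists y; rewrite Cy.
Qed.

Lemma edge_orbN x y : e x y -> orbN y = orbN x \/ adj (orbN x) (orbN y).
Proof.
move=> xy; have [->|yx] := eqVneq (orbN y) (orbN x); [by left | right].
by apply: nbr_in_quot_adj; rewrite ?orbN_orbs //; apply/card_gt0P; exists y; rewrite inE orbit_refl.
Qed.

Hypotheses (quot_connected : {in orbs N &, forall B C, connect adj B C})
  (quot_adj_deg2 : {in orbs N, forall B, #|[set C | adj B C]| = 2})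
  (e_cubic : cubic e).

Lemma card_nbr_in_cycle x : exists C1 C2 : {set V},
  [/\ adj (orbN x) C1, adj (orbN x) C2, C1 != C2,
      #|nbr_in x (orbN x)| + #|nbr_in x C1| + #|nbr_in x C2| = 3 &
      {in orbs N, forall C, C \notin [:: orbN x; C1; C2] -> nbr_in x C = set0}].
Proof.
have /eqP/cards2P[C1 [C2 [C12 adjE]]] := quot_adj_deg2 (orbN_orbs x).
have adj_x C : adj (orbN x) C = (C == C1) || (C == C2).
  by rewrite -in_set2 -adjE inE.
have [adj1 adj2] : adj (orbN x) C1 /\ adj (orbN x) C2 by rewrite !adj_x !eqxx orbT.
exists C1, C2; split=> //; last first.
  move=> C HC; rewrite !inE => /norP[Cx /norP[C1' C2']].
  apply/setP => y; rewrite !inE; apply/andP => -[Cy xy].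
  rewrite (orbs_orbN HC Cy) in Cx C1' C2'.
  by case: (edge_orbN xy) => [/eqP|]; rewrite ?adj_x ?(negbTE Cx) ?(negbTE C1') ?(negbTE C2').
have disj C D : C \in orbs N -> D \in orbs N -> C != D -> nbr_in x C :&: nbr_in x D = set0.
  move=> HC HD CD; apply/setP => y; rewrite !inE; apply/andP => -[/andP[Cy _] /andP[Dy _]].
  by move: CD; rewrite (orbs_orbN HC Cy) (orbs_orbN HD Dy) eqxx.
have [HC1 HC2] := (quot_adj_orbs adj1, quot_adj_orbs adj2).
have [xC1 xC2] : orbN x != C1 /\ orbN x != C2 by case/and4P: adj1; case/and4P: adj2.
have nbrE : [set y | e x y] = nbr_in x (orbN x) :|: nbr_in x C1 :|: nbr_in x C2.
  apply/setP => y; rewrite !inE; case xy: (e x y); rewrite ?andbF //= !andbT.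
  case: (edge_orbN xy) => [<-|]; first by rewrite orbit_refl.
  by rewrite adj_x => /orP[]/eqP<-; rewrite orbit_refl ?orbT.
have := e_cubic x; rewrite nbrE cardsU setIUl !disj ?orbN_orbs // setU0 cards0 subn0.
by rewrite cardsU disj ?orbN_orbs // cards0 subn0.
Qed.

Local Notation K := (orbit_kernel G N).

Lemma orbit_kernelP g :
  reflect (g \in G /\ {in orbs N, forall B : {set V}, g @: B = B}) (g \in K).
Proof.
rewrite inE; apply: (iffP andP) => [[Gg /astabP gB]|[Gg gB]]; split=> //.
by apply/astabP.
Qed.

Lemma kernel_subG : K \subset G.
Proof. exact: subsetIl. Qed.

Lemma kernel_mem_orbs g (B : {set V}) x : g \in K -> B \in orbs N -> (g x \in B) = (x \in B).
Proof. by case/orbit_kernelP=> _ gB HB; rewrite -{1}(gB B HB) (mem_imset _ _ (@perm_inj _ g)). Qed.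

Lemma kernel_nbr_in g x y (C : {set V}) :
  g \in K -> C \in orbs N -> y \in nbr_in x C -> g y \in nbr_in (g x) C.
Proof.
move=> Kg HC; rewrite !inE => /andP[Cy xy].
by rewrite kernel_mem_orbs // Cy edge_aut // (subsetP kernel_subG).
Qed.

Lemma kernel_fix_nbr g x y :
  g \in K -> g x = x -> e x y -> #|nbr_in x (orbN y)| <= 1 -> g y = y.
Proof.
move=> Kg gx xy /card_le1_eqP; have y_nbr : y \in nbr_in x (orbN y).
  by rewrite inE xy andbT; apply: orbit_refl.
by apply=> //; rewrite -{1}gx; apply: kernel_nbr_in; rewrite ?orbN_orbs.
Qed.

Lemma kernel_of_fix_quot_edge g (B C : {set V}) :
  g \in G -> adj B C -> g @: B = B -> g @: C = C -> g \in K.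
Proof.
move=> Gg BC gB gC; apply/orbit_kernelP; split=> //.
apply: (cycle_aut_fix_edge quot_adj_sym quot_adj_orbs quot_adj_deg2 quot_connected _ _ BC) => //.
  exact: imset_inj (@perm_inj _ g).
by move=> ? ?; apply: quot_adj_imset.
Qed.

Hypothesis e_connected : graph_connected e.

Lemma stab_imset_orbN g x : g \in 'C_G[x | 'P] -> g @: orbN x = orbN x.
Proof. by case/stab_permP=> Gg gx; rewrite imset_orbN // gx. Qed.

Section OwnOrbitNeighbour.

Hypothesis own_nbr : forall x, 0 < #|nbr_in x (orbN x)|.

Lemma card_nbr_in_le1 x (C : {set V}) : C \in orbs N -> #|nbr_in x C| <= 1.
Proof.
move=> HC; have [C1 [C2 [adj1 adj2 _ card3 other0]]] := card_nbr_in_cycle x.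
have [/(other0 C HC)->|] := boolP (C \notin [:: orbN x; C1; C2]); first by rewrite cards0.
move: card3 (own_nbr x) (quot_adj_nbr_in adj1) (quot_adj_nbr_in adj2).
by rewrite negbK !inE => card3 pos0 pos1 pos2 /or3P[]/eqP->; lia.
Qed.

Lemma kernel_stab_trivial x : 'C_K[x | 'P] = 1.
Proof.
apply/eqP; rewrite eqEsubset sub1G andbT; apply/subsetP => g /stab_permP[Kg gx].
suff -> : g = 1 by rewrite inE.
apply: (connected_perm_fix edge_sym e_connected _ gx) => y z yz gy.
exact: kernel_fix_nbr Kg gy yz (card_nbr_in_le1 _ (orbN_orbs z)).
Qed.

Lemma card_stab_le2 x : #|'C_G[x | 'P]| <= 2.
Proof.
have [C1 [_ [adj1 _ _ _ _]]] := card_nbr_in_cycle x.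
have inj : {in 'C_G[x | 'P] &, injective (fun g : {perm V} => g @: C1)}.
  move=> g h Gxg Gxh /= gC_hC; have Gxk : g * h^-1 \in 'C_G[x | 'P] by rewrite groupM ?groupV.
  have kC1 : (g * h^-1) @: C1 = C1 by rewrite imset_permM gC_hC imset_permK.
  have Kk : g * h^-1 \in K.
    by apply: kernel_of_fix_quot_edge adj1 (stab_imset_orbN Gxk) kC1; case/stab_permP: Gxk.
  have : g * h^-1 \in 'C_K[x | 'P] by apply/stab_permP; case/stab_permP: Gxk.
  by rewrite kernel_stab_trivial inE -eq_mulgV1 => /eqP.
rewrite -(card_in_imset inj) -(quot_adj_deg2 (orbN_orbs x)); apply: subset_leq_card.
apply/subsetP => _ /imsetP[g Gxg ->]; rewrite inE -(stab_imset_orbN Gxg).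
by apply: quot_adj_imset adj1; case/stab_permP: Gxg.
Qed.

End OwnOrbitNeighbour.

Section ArcOrbit.

Variables u w : V.
Hypotheses (uw : e u w) (u_nbr2 : #|nbr_in u (orbN w)| = 2).

Definition arc_orbit x y := [exists n in N, (x == n u) && (y == n w)].

Definition keeps_arc_orbit (g : {perm V}) := arc_orbit (g u) (g w).

Lemma arc_orbitP x y : reflect (exists2 n, n \in N & x = n u /\ y = n w) (arc_orbit x y).
Proof.
apply: (iffP existsP) => [[n /and3P[Nn /eqP-> /eqP->]]|[n Nn [-> ->]]]; exists n => //.
by rewrite Nn !eqxx.
Qed.

Lemma arc_orbit_edge x y : arc_orbit x y -> [/\ x \in orbN u, y \in orbN w & e x y].
Proof.
case/arc_orbitP=> n Nn [-> ->]; rewrite !mem_orbN //.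
by rewrite edge_aut // (subsetP N_subG).
Qed.

Lemma arc_orbit_N n x y : n \in N -> arc_orbit (n x) (n y) = arc_orbit x y.
Proof.
suff arc_N m x' y' : m \in N -> arc_orbit x' y' -> arc_orbit (m x') (m y').
  move=> Nn; apply/idP/idP; last exact: arc_N.
  by move/(arc_N _ _ _ (groupVr Nn)); rewrite !permK.
move=> Nm /arc_orbitP[k Nk [-> ->]]; apply/arc_orbitP.
by exists (k * m); rewrite ?groupM // !permM.
Qed.

Lemma arc_orbit_baseniq_r x y y' : arc_orbit x y -> arc_orbit x y' -> y = y'.
Proof.
case/arc_orbitP=> n Nn [-> ->] /arc_orbitP[m Nm [num ->]].
by rewrite (semiregular_eq Nn Nm num).
Qed.

Lemma arc_orbit_baseniq_l x x' y : arc_orbit x y -> arc_orbit x' y -> x = x'.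
Proof.
case/arc_orbitP=> n Nn [-> nw] /arc_orbitP[m Nm [-> mw]].
by rewrite (semiregular_eq Nn Nm (etrans (esym nw) mw)).
Qed.

Lemma arc_orbit_exists_r x : x \in orbN u -> exists y, arc_orbit x y.
Proof. by case/orbitP=> n Nn <-; exists (n w); apply/arc_orbitP; exists n. Qed.

Lemma arc_orbit_exists_l y : y \in orbN w -> exists x, arc_orbit x y.
Proof. by case/orbitP=> n Nn <-; exists (n u); apply/arc_orbitP; exists n. Qed.

(* Each vertex of orbN u has two neighbours in orbN w, and N is regular on orbits, so the
   arcs from orbN u to orbN w form exactly two N-orbits: arc_orbit and its complement. *)
Lemma arc_orbit_xor x y1 y2 : x \in orbN u -> y1 \in nbr_in x (orbN w) ->
  y2 \in nbr_in x (orbN w) -> y1 != y2 -> arc_orbit x y1 = ~~ arc_orbit x y2.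
Proof.
move=> ux y1_nbr y2_nbr y12; have [z xz] := arc_orbit_exists_r ux.
have [_ wz xz_edge] := arc_orbit_edge xz.
have z_nbr : z \in nbr_in x (orbN w) by rewrite inE wz.
have not_arc y : y != z -> arc_orbit x y = false.
  by move=> yz; apply/negbTE/negP => xy; move: yz; rewrite (arc_orbit_baseniq_r xz xy) eqxx.
have := z_nbr; rewrite (card2_set2 _ y1_nbr y2_nbr y12); last first.
  by rewrite (card_nbr_in_orbN (orbN_orbs w) ux).
by rewrite !inE => /orP[]/eqP zE; rewrite -zE xz not_arc // zE // eq_sym.
Qed.

Lemma arc_orbit_base : arc_orbit u w.
Proof. by apply/arc_orbitP; exists 1; rewrite ?group1 ?perm1. Qed.

Lemma mem_nbr_in_arc : w \in nbr_in u (orbN w).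
Proof. by rewrite inE uw andbT; apply: orbit_refl. Qed.

Lemma kernel_arc_orbit_vertex g x y1 y2 : g \in K -> x \in orbN u ->
  y1 \in nbr_in x (orbN w) -> y2 \in nbr_in x (orbN w) ->
  (arc_orbit (g x) (g y1) == arc_orbit x y1) = (arc_orbit (g x) (g y2) == arc_orbit x y2).
Proof.
move=> Kg ux y1_nbr y2_nbr; have [->//|y12] := eqVneq y1 y2.
have gux : g x \in orbN u by rewrite kernel_mem_orbs ?orbN_orbs.
have g_nbr y : y \in nbr_in x (orbN w) -> g y \in nbr_in (g x) (orbN w).
  exact: kernel_nbr_in (orbN_orbs w).
rewrite (arc_orbit_xor ux y1_nbr y2_nbr y12).
rewrite (arc_orbit_xor gux (g_nbr _ y1_nbr) (g_nbr _ y2_nbr)) ?(inj_eq perm_inj) //.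
by case: (arc_orbit x y2); case: (arc_orbit (g x) (g y2)).
Qed.

(* As g normalises N, it maps the N-orbit arc_orbit onto an N-orbit of arcs from orbN u to
   orbN w: either arc_orbit itself or its complement, as recorded by keeps_arc_orbit g. *)
Lemma kernel_arc_orbit g x y : g \in K -> x \in orbN u -> y \in nbr_in x (orbN w) ->
  arc_orbit (g x) (g y) = (arc_orbit x y == keeps_arc_orbit g).
Proof.
move=> Kg /orbitP[n Nn <-] /= y_nbr; rewrite apermE in y_nbr *.
have Gg := subsetP kernel_subG g Kg.
have Gn := subsetP N_subG n Nn.
rewrite -[y](permKV n) (arc_orbit_N (n := n)) // -!(permJ n g).
rewrite (arc_orbit_N (n := n ^ g)) ?memJ_N //.
have y'_nbr : n^-1 y \in nbr_in u (orbN w).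
  move: y_nbr; rewrite !inE mem_orbs_N ?groupV ?orbN_orbs // => /andP[-> nuy].
  by rewrite -[u in e u _](permK n) edge_aut ?groupV.
have := kernel_arc_orbit_vertex Kg (orbit_refl _ _ _) y'_nbr mem_nbr_in_arc.
rewrite /keeps_arc_orbit arc_orbit_base.
by case: (arc_orbit (g u) _); case: (arc_orbit u _); case: (arc_orbit (g u) (g w)).
Qed.

Lemma keeps_arc_orbitM g h : g \in K -> h \in K ->
  keeps_arc_orbit (g * h) = (keeps_arc_orbit g == keeps_arc_orbit h).
Proof.
move=> Kg Kh; rewrite {1}/keeps_arc_orbit !permM kernel_arc_orbit //.
  by rewrite kernel_mem_orbs ?orbN_orbs ?orbit_refl.
exact: kernel_nbr_in (orbN_orbs w) mem_nbr_in_arc.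
Qed.

Lemma keeps_arc_orbit1 : keeps_arc_orbit 1.
Proof. by rewrite /keeps_arc_orbit !perm1 arc_orbit_base. Qed.

Lemma kernel_fix_arc_nbr_r g x : g \in K -> keeps_arc_orbit g -> x \in orbN u -> g x = x ->
  {in nbr_in x (orbN w), g =1 id}.
Proof.
move=> Kg keeps_g ux gx; have [z xz] := arc_orbit_exists_r ux.
have [_ wz xz_edge] := arc_orbit_edge xz.
have z_nbr : z \in nbr_in x (orbN w) by rewrite inE wz.
apply: (card2_fixed _ perm_inj _ z_nbr).
- by rewrite (card_nbr_in_orbN (orbN_orbs w) ux).
- by move=> y y_nbr; rewrite -gx; apply: kernel_nbr_in; rewrite ?orbN_orbs.
apply/esym/(arc_orbit_baseniq_r xz).
by rewrite -{1}gx kernel_arc_orbit // xz keeps_g.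
Qed.

Lemma kernel_fix_arc_nbr_l g y : g \in K -> keeps_arc_orbit g -> y \in orbN w -> g y = y ->
  {in nbr_in y (orbN u), g =1 id}.
Proof.
move=> Kg keeps_g wy gy; have [z zy] := arc_orbit_exists_l wy.
have [uz _ zy_edge] := arc_orbit_edge zy.
have z_nbr : z \in nbr_in y (orbN u) by rewrite inE uz edge_sym.
apply: (card2_fixed _ perm_inj _ z_nbr).
- by rewrite card_nbr_in_sym (orbit_eqP wy).
- by move=> x x_nbr; rewrite -gy; apply: kernel_nbr_in; rewrite ?orbN_orbs.
apply/esym/(arc_orbit_baseniq_l zy).
by rewrite -{1}gy kernel_arc_orbit // ?zy ?keeps_g // inE wy.
Qed.

End ArcOrbit.

Section NoOwnOrbitNeighbour.

Hypothesis no_own_nbr : forall x, nbr_in x (orbN x) = set0.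

Lemma card_nbr_in_two x : exists C : {set V}, [/\ C \in orbs N, #|nbr_in x C| = 2 &
  {in orbs N, forall D, D != C -> #|nbr_in x D| <= 1}].
Proof.
have [C1 [C2 [adj1 adj2 C12 card3 other0]]] := card_nbr_in_cycle x.
move: card3 (quot_adj_nbr_in adj1) (quot_adj_nbr_in adj2).
rewrite no_own_nbr cards0 add0n => card3 pos1 pos2.
have small D : D \in orbs N -> D \notin [:: C1; C2] -> #|nbr_in x D| <= 1.
  move=> HD; have [->|Dx] := eqVneq D (orbN x); first by rewrite no_own_nbr cards0.
  by rewrite !inE => DC; rewrite other0 ?cards0 // !inE negb_or Dx.
have [c1|c1] : #|nbr_in x C1| = 2 \/ #|nbr_in x C1| = 1%N by lia.
- exists C1; split=> //; first exact: quot_adj_orbs adj1.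
  move=> D HD DC1; have [->|DC2] := eqVneq D C2; first by lia.
  by apply: small; rewrite // !inE negb_or DC1.
- exists C2; split=> //; [exact: quot_adj_orbs adj2 | lia |].
  move=> D HD DC2; have [->|DC1] := eqVneq D C1; first by rewrite c1.
  by apply: small; rewrite // !inE negb_or DC1.
Qed.

Definition partner (B : {set V}) : {set V} :=
  odflt set0 [pick C in orbs N | [exists x in B, #|nbr_in x C| == 2]].

Lemma partner_eq (B C : {set V}) x :
  B \in orbs N -> x \in B -> C \in orbs N -> #|nbr_in x C| = 2 -> partner B = C.
Proof.
move=> HB Bx HC xC2; have [D [HD _ unique2]] := card_nbr_in_two x.
have onlyD D' : D' \in orbs N -> #|nbr_in x D'| = 2 -> D' = D.
  move=> HD' xD'2; have [//|D'D] := eqVneq D' D.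
  by have := unique2 D' HD' D'D; rewrite xD'2.
rewrite /partner; case: pickP => [D' /andP[HD' /existsP[y /andP[By /eqP yD'2]]]|no_partner] /=.
  rewrite (onlyD C) // (onlyD D') // -yD'2; symmetry.
  by apply: card_nbr_in_orbN; rewrite // -(orbs_orbN HB Bx).
by move: (no_partner C); rewrite HC /=; case: existsP => // -[]; exists x; rewrite Bx xC2.
Qed.

Lemma partnerP (B : {set V}) x :
  B \in orbs N -> x \in B -> partner B \in orbs N /\ #|nbr_in x (partner B)| = 2.
Proof.
by move=> HB Bx; have [C [HC xC2 _]] := card_nbr_in_two x; rewrite (partner_eq HB Bx HC).
Qed.

Lemma partner_orbs : {in orbs N, forall B, partner B \in orbs N}.
Proof. by move=> _ /orbsP[x ->]; case: (partnerP (orbN_orbs x) (orbit_refl _ _ x)). Qed.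

Lemma partner_neq : {in orbs N, forall B, partner B != B}.
Proof.
move=> _ /orbsP[x ->]; have [_] := partnerP (orbN_orbs x) (orbit_refl _ _ x).
by move=> p2; apply/eqP => pE; move: p2; rewrite pE no_own_nbr cards0.
Qed.

Lemma partnerK : {in orbs N, involutive partner}.
Proof.
move=> _ /orbsP[x ->]; have [Hp p2] := partnerP (orbN_orbs x) (orbit_refl _ _ x).
have /card_gt0P[y] : 0 < #|nbr_in x (partner (orbN x))| by rewrite p2.
rewrite inE => /andP[py _]; rewrite (orbs_orbN Hp py).
apply: (partner_eq (orbN_orbs y) (orbit_refl _ _ y) (orbN_orbs x)).
by rewrite card_nbr_in_sym -(orbs_orbN Hp py).
Qed.

Definition base_arc (B : {set V}) : option (V * V) :=
  [pick p : V * V | (p.1 \in B) && (p.2 \in nbr_in p.1 (partner B))].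

Definition keeps_matching (B : {set V}) (g : {perm V}) :=
  if base_arc B is Some (u, w) then keeps_arc_orbit u w g else false.

Lemma base_arcP (B : {set V}) : B \in orbs N -> exists u w,
  [/\ base_arc B = Some (u, w), B = orbN u, partner B = orbN w, e u w &
      #|nbr_in u (orbN w)| = 2].
Proof.
move=> HB; rewrite /base_arc; case: pickP => [[u w] /andP[/= Bu]|no_arc].
  rewrite inE => /andP[pw uw]; have [Hp u2] := partnerP HB Bu.
  by exists u, w; rewrite -(orbs_orbN HB Bu) -(orbs_orbN Hp pw).
case/orbsP: HB no_arc => x -> no_arc.
have [_ p2] := partnerP (orbN_orbs x) (orbit_refl 'P N x).
have /card_gt0P[y xy] : 0 < #|nbr_in x (partner (orbN x))| by rewrite p2.
by have := no_arc (x, y); rewrite /= orbit_refl xy.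
Qed.

Lemma keeps_matchingM (B : {set V}) g h : B \in orbs N -> g \in K -> h \in K ->
  keeps_matching B (g * h) = (keeps_matching B g == keeps_matching B h).
Proof.
move=> /base_arcP[u [w [arcE _ _ uw u2]]] Kg Kh.
by rewrite /keeps_matching arcE keeps_arc_orbitM.
Qed.

Lemma keeps_matching1 (B : {set V}) : B \in orbs N -> keeps_matching B 1.
Proof.
by case/base_arcP=> u [w [arcE _ _ _ _]]; rewrite /keeps_matching arcE keeps_arc_orbit1.
Qed.

Lemma keeps_matchingV (B : {set V}) g :
  B \in orbs N -> g \in K -> keeps_matching B g^-1 = keeps_matching B g.
Proof.
move=> HB Kg; have := keeps_matchingM HB (groupVr Kg) Kg.
by rewrite mulVg keeps_matching1 // => /esym/eqP.
Qed.

Lemma kernel_fix_partner_nbr g x y : g \in K -> g x = x ->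
  y \in nbr_in x (partner (orbN x)) ->
  keeps_matching (orbN x) g || keeps_matching (partner (orbN x)) g -> g y = y.
Proof.
move=> Kg gx y_nbr; case/orP.
  have [u [w [arcE xE pE uw u2]]] := base_arcP (orbN_orbs x).
  rewrite /keeps_matching arcE => keeps_g; rewrite pE in y_nbr.
  by apply: (kernel_fix_arc_nbr_r uw u2 Kg keeps_g _ gx y_nbr); rewrite -xE orbit_refl.
have Hp := partner_orbs (orbN_orbs x).
have [u [w [arcE pE ppE uw u2]]] := base_arcP Hp.
rewrite /keeps_matching arcE => keeps_g; rewrite pE in y_nbr.
rewrite partnerK ?orbN_orbs // in ppE.
by apply: (kernel_fix_arc_nbr_l uw u2 Kg keeps_g _ gx y_nbr); rewrite -ppE orbit_refl.
Qed.

Definition partner_reps := involution_reps (orbs N) partner.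

Lemma card_orbs_partner_reps : #|orbs N| = (#|partner_reps|).*2.
Proof. exact: card_fixfree_involution partner_orbs partnerK partner_neq. Qed.

Lemma kernel_stab_keeps_trivial g x : g \in 'C_K[x | 'P] ->
  {in partner_reps, forall B, keeps_matching B g} -> g = 1.
Proof.
case/stab_permP=> Kg gx keeps_g.
apply: (connected_perm_fix edge_sym e_connected _ gx) => y z yz gy.
have [zp|z_not_p] := eqVneq (orbN z) (partner (orbN y)).
  apply: kernel_fix_partner_nbr gy _ _ => //; first by rewrite inE -zp orbit_refl.
  have := involution_repsU partner_orbs partnerK partner_neq (orbN_orbs y).
  by case/orP=> /keeps_g ->; rewrite ?orbT.
apply: kernel_fix_nbr Kg gy yz _.
have [C [HC y2 unique2]] := card_nbr_in_two y.
by apply: unique2; rewrite ?orbN_orbs // -(partner_eq (orbN_orbs y) (orbit_refl _ _ y) HC y2).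
Qed.

Lemma stab_sub_kernel x : 'C_G[x | 'P] \subset K.
Proof.
apply/subsetP => g Gxg; have /stab_permP[Gg gx] := Gxg.
have [Hp p2] := partnerP (orbN_orbs x) (orbit_refl 'P N x).
have gp : g @: partner (orbN x) = partner (orbN x).
  apply/esym/(partner_eq (orbN_orbs x) (orbit_refl 'P N x)); first exact: imset_orbs.
  by rewrite -{1}gx card_nbr_in_imset.
apply: (kernel_of_fix_quot_edge Gg _ (stab_imset_orbN Gxg) gp).
by apply: nbr_in_quot_adj; rewrite ?p2 ?partner_neq ?orbN_orbs.
Qed.

Lemma stab_eq_kernel_stab x : 'C_G[x | 'P] = 'C_K[x | 'P].
Proof.
apply/setP => g; apply/stab_permP/stab_permP => -[Gg gx]; split=> //.
  by apply: (subsetP (stab_sub_kernel x)); apply/stab_permP.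
exact: (subsetP kernel_subG).
Qed.

Definition matching_sign (g : {perm V}) := [set B in partner_reps | keeps_matching B g].

Lemma partner_reps_orbs : partner_reps \subset orbs N.
Proof. by apply/subsetP => B /setIdP[]. Qed.

Lemma matching_signM g h : g \in K -> h \in K ->
  matching_sign (g * h) = [set B in partner_reps | keeps_matching B g == keeps_matching B h].
Proof.
move=> Kg Kh; apply/setP => B; rewrite [LHS]inE [RHS]inE.
by case HB: (B \in partner_reps); rewrite //= keeps_matchingM // (subsetP partner_reps_orbs).
Qed.

Lemma matching_sign_inj x : {in 'C_K[x | 'P] &, injective matching_sign}.
Proof.
move=> g h Kxg Kxh sign_gh; apply/eqP; rewrite eq_mulVg1; apply/eqP.
have /stab_permP[Kg _] := Kxg; have /stab_permP[Kh _] := Kxh.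
apply: (kernel_stab_keeps_trivial (x := x)); first by rewrite groupM ?groupV.
move=> B repB; have HB := subsetP partner_reps_orbs B repB.
rewrite keeps_matchingM ?groupV // keeps_matchingV //.
have := congr1 (fun S : {set {set V}} => B \in S) sign_gh.
by rewrite /= [in LHS]inE [in RHS]inE repB /= => ->.
Qed.

Lemma kernel_stab_abelem x : 2.-abelem 'C_K[x | 'P].
Proof.
have sign_inj := @matching_sign_inj x.
have inK g : g \in 'C_K[x | 'P] -> g \in K by case/stab_permP.
apply/abelemP => //; split=> [|g Kxg].
  apply/centsP => g Kxg h Kxh; apply: sign_inj; rewrite ?groupM //.
  by rewrite !matching_signM ?inK //; apply: eq_finset => B; rewrite eq_sym.
apply: sign_inj; rewrite ?groupX ?group1 // expgS expg1 matching_signM ?inK //.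
apply/setP => B; rewrite [LHS]inE [RHS]inE eqxx.
by case repB: (B \in partner_reps); rewrite //= keeps_matching1 // (subsetP partner_reps_orbs).
Qed.

Lemma card_kernel_stab x : #|'C_K[x | 'P]| <= 2 ^ #|partner_reps|.
Proof.
rewrite -card_powerset -(card_in_imset (@matching_sign_inj x)).
apply/subset_leq_card/subsetP => _ /imsetP[g _ ->].
by rewrite powersetE /matching_sign setIdE subsetIl.
Qed.

End NoOwnOrbitNeighbour.

Lemma card_nbr_in_orbN_transitive x y : [transitive G, on [set: V] | 'P] ->
  #|nbr_in x (orbN x)| = #|nbr_in y (orbN y)|.
Proof.
move=> G_trans; have [g Gg ->] := atransP2 G_trans (in_setT x) (in_setT y).
by rewrite /= -imset_orbN // card_nbr_in_imset.
Qed.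

End NormalQuotient.

Theorem lemma2p3 (V : finType) (e : rel V) (alpha : V) (G N : {group {perm V}})
  (r : nat) :
  simple_graph e -> graph_connected e -> cubic e ->
  G \subset Aut_graph e ->
  [transitive G, on [set: V] | 'P] ->
  N <| G ->
  (forall x : V, 'C_N[x | 'P] = 1) ->
  2.-group 'C_G[alpha | 'P] -> 'C_G[alpha | 'P] != 1 ->
  3 <= r -> quotient_is_cycle e N r ->
  (#|'C_G[alpha | 'P]| = 2 /\ 'C_(orbit_kernel G N)[alpha | 'P] = 1)
  \/
  [/\ ~~ odd r,
      'C_G[alpha | 'P] = 'C_(orbit_kernel G N)[alpha | 'P],
      2.-abelem 'C_G[alpha | 'P] &
      #|'C_G[alpha | 'P]| <= 2 ^ r./2].
Proof.
move=> e_simple e_conn e_cubic G_aut G_trans N_normal N_semireg _ Galpha_ntriv _.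
case=> card_orbs quot_connected quot_adj_deg2.
have own_nbr x : #|nbr_in e x (orbit 'P N x)| = #|nbr_in e alpha (orbit 'P N alpha)|.
  by apply: (card_nbr_in_orbN_transitive (G := G)).
have [no_own|some_own] := posnP #|nbr_in e alpha (orbit 'P N alpha)|.
  have no_own_nbr x : nbr_in e x (orbit 'P N x) = set0.
    by apply/eqP; rewrite -cards_eq0 own_nbr no_own.
  have r_reps : r = (#|partner_reps e N|).*2.
    by rewrite -card_orbs; apply: (card_orbs_partner_reps (G := G)).
  right; rewrite r_reps odd_double doubleK (stab_eq_kernel_stab (e := e) (N := N)) //.
  by split=> //; [apply: (kernel_stab_abelem (e := e)) | apply: card_kernel_stab].
have own_nbr_pos x : 0 < #|nbr_in e x (orbit 'P N x)| by rewrite own_nbr.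
left; split; last by apply: (kernel_stab_trivial (e := e)).
apply/eqP; rewrite eqn_leq cardG_gt1 Galpha_ntriv andbT.
by apply: (card_stab_le2 (e := e) (N := N)).
Qed.
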